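(* For every $Z\in\mathfrak m$, the endomorphisms $\mathrm{ad}_{JZ}^2$ and $\mathrm{ad}_Z^2$ of $\mathfrak m$ commute.
   Context: $\mathfrak g$ is a complex simple Lie algebra with a decomposition $\mathfrak g=\mathfrak k\oplus\mathfrak m$ into the $\pm1$-eigenspaces of an involutive automorphism, arising from an irreducible Hermitian symmetric space: there is $\Upsilon$ in the center of $\mathfrak k$ such that $\mathrm{ad}_\Upsilon$ has eigenvalues $\pm i$ on $\mathfrak m$, with eigenspaces $\mathfrak m^\pm$ (so $[\mathfrak k,\mathfrak m^\pm]\subseteq\mathfrak m^\pm$, $[\mathfrak m^+,\mathfrak m^+]=[\mathfrak m^-,\mathfrak m^-]=0$, $[\mathfrak m,\mathfrak m]\subseteq\mathfrak k$). $J=\mathrm{ad}_\Upsilon|_{\mathfrak m}$. Note $\mathrm{ad}_Z^2$ maps $\mathfrak m$ into $\mathfrak m$ for $Z\in\mathfrak m$. *)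

From HB Require Import structures.
From mathcomp Require Import all_boot all_order all_algebra.
From mathcomp Require Import complex.
From mathcomp Require Import reals.
Set Implicit Arguments. Unset Strict Implicit. Unset Printing Implicit Defensive.
Import Order.TTheory GRing.Theory Num.Theory.
Local Open Scope ring_scope.

Section Lie.
Variables (K : fieldType) (V : vectType K).

Definition lie_bracket (br : V -> V -> V) : Prop :=
  [/\ (forall a x y z, br (a *: x + y) z = a *: br x z + br y z),
      (forall a x y z, br z (a *: x + y) = a *: br z x + br z y),
      (forall x, br x x = 0) &
      (forall x y z, br x (br y z) + br y (br z x) + br z (br x y) = 0)].

Definition ad (br : V -> V -> V) (x : V) : V -> V := br x.

Definition lie_ideal (br : V -> V -> V) (U : {vspace V}) : Prop :=
  forall x u, u \in U -> br x u \in U.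

Definition simple_lie (br : V -> V -> V) : Prop :=
  lie_bracket br /\ (exists x y, br x y != 0) /\
  (forall U : {vspace V}, lie_ideal br U -> U = 0%VS \/ U = fullv).

Definition lie_involution (br : V -> V -> V) (theta : 'End(V)) : Prop :=
  (forall x y, theta (br x y) = br (theta x) (theta y)) /\
  (forall x, theta (theta x) = x).

Definition in_k (theta : 'End(V)) (x : V) : Prop := theta x = x.
Definition in_m (theta : 'End(V)) (x : V) : Prop := theta x = - x.
End Lie.

Definition hermitian_element (R : realType) (V : vectType R[i])
  (br : V -> V -> V) (theta : 'End(V)) (Ups : V) : Prop :=
  [/\ in_k theta Ups,
      (forall X, in_k theta X -> br Ups X = 0) &
      (forall X, in_m theta X -> exists Xp Xm : V,
          [/\ X = Xp + Xm, in_m theta Xp, in_m theta Xm,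
              br Ups Xp = 'i *: Xp & br Ups Xm = - ('i *: Xm)])].

(* J = ad_Upsilon restricted to m *)
Definition Jop (R : realType) (V : vectType R[i]) (br : V -> V -> V) (Ups : V) :
  V -> V := ad br Ups.

From HB Require Import structures.
From mathcomp Require Import all_boot all_order all_algebra.
From mathcomp Require Import complex.
From mathcomp Require Import reals.
Import GRing.Theory Num.Theory.
Local Open Scope ring_scope.
Set Implicit Arguments. Unset Strict Implicit.

(* Write Z = a + v with a in m^+ and v in m^-, so that JZ = i (a - v) and
   ad_JZ^2 = - ad_(a-v)^2; by linearity it suffices to test on x in m^+ (the
   case of m^- is symmetric).  Since brackets of two elements of the same m^(+-)
   vanish and k is centralised by Upsilon, the grading kills [a,x], ad_a^2 [v,x],
   ad_v^3 x and ad_v^3 a.  Then ad_(a-v) ad_(a+v)^2 x and ad_(a+v) ad_(a-v)^2 x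
   are the same vector u, and the two sides differ by 2 ad_v u.  Finally
   ad_(ad_v^3 a) = 0, expanded with the Jacobi identity, yields 3 ad_v u = 0. *)

Section LieAlgebra.
Variables (K : fieldType) (V : vectType K) (br : V -> V -> V).
Hypothesis br_lie : lie_bracket br.

Lemma brDl x y z : br (x + y) z = br x z + br y z.
Proof. by case: br_lie => linl _ _ _; have := linl 1 x y z; rewrite !scale1r. Qed.

Lemma brDr x y z : br z (x + y) = br z x + br z y.
Proof. by case: br_lie => _ linr _ _; have := linr 1 x y z; rewrite !scale1r. Qed.

Lemma br0l z : br 0 z = 0.
Proof. by apply/(addrI (br 0 z)); rewrite -brDl !addr0. Qed.

Lemma br0r z : br z 0 = 0.
Proof. by apply/(addrI (br z 0)); rewrite -brDr !addr0. Qed.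

Lemma brZl c x z : br (c *: x) z = c *: br x z.
Proof. by case: br_lie => linl _ _ _; rewrite -[c *: x]addr0 linl br0l addr0. Qed.

Lemma brZr c x z : br z (c *: x) = c *: br z x.
Proof. by case: br_lie => _ linr _ _; rewrite -[c *: x]addr0 linr br0r addr0. Qed.

Lemma brNl x z : br (- x) z = - br x z.
Proof. by rewrite -scaleN1r brZl scaleN1r. Qed.

Lemma brNr x z : br z (- x) = - br z x.
Proof. by rewrite -scaleN1r brZr scaleN1r. Qed.

Lemma brBl x y z : br (x - y) z = br x z - br y z.
Proof. by rewrite brDl brNl. Qed.

Lemma brBr x y z : br z (x - y) = br z x - br z y.
Proof. by rewrite brDr brNr. Qed.

Lemma brC x y : br x y = - br y x.
Proof.
case: br_lie => _ _ brxx _; apply/eqP; rewrite -addr_eq0.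
by have := brxx (x + y); rewrite brDl !brDr !brxx add0r addr0 => ->.
Qed.

Lemma brJ x y z : br x (br y z) = br (br x y) z + br y (br x z).
Proof.
case: br_lie => _ _ _ jacobi; rewrite (brC (br x y)) (brC x z) brNr -opprD.
by apply/eqP; rewrite -addr_eq0 [br z _ + _]addrC addrA jacobi.
Qed.

Lemma br_brl x y z : br (br x y) z = br x (br y z) - br y (br x z).
Proof. by rewrite brJ addrK. Qed.

Lemma ad_cube_swap a v x : 3%:R != 0 :> K ->
  br a x = 0 -> br v (br v (br v x)) = 0 -> br v (br v (br v a)) = 0 ->
  br v (br a (br v (br v x))) = br v (br v (br a (br v x))).
Proof.
move=> three_neq0 ax0 v3x0 v3a0.
have := congr1 (br^~ x) v3a0; rewrite /= br0l !br_brl ax0 v3x0 !brBr !br0r.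
set X := br v (br v (br a (br v x))); set Y := br v (br a (br v (br v x))).
have -> : 0 - X - (X - Y) - (X - Y - (Y - 0)) = (Y - X) *+ 3.
  rewrite sub0r subr0 !opprB !mulrS mulr0n addr0.
  by rewrite addrAC [- X + _]addrA [- X + Y]addrC -addrA.
move/eqP; rewrite -scaler_nat scaler_eq0 (negPf three_neq0) subr_eq0.
by move/eqP.
Qed.

Lemma adsq_sum_diff_comm a v x : 3%:R != 0 :> K ->
  br a x = 0 -> br a (br a (br v x)) = 0 ->
  br v (br v (br v x)) = 0 -> br v (br v (br v a)) = 0 ->
  br (a - v) (br (a - v) (br (a + v) (br (a + v) x))) =
  br (a + v) (br (a + v) (br (a - v) (br (a - v) x))).
Proof.
move=> three_neq0 ax0 a2vx0 v3x0 v3a0.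
set u := br a (br v (br v x)) - br v (br a (br v x)).
have v_u0 : br v u = 0 by rewrite brBr ad_cube_swap // subrr.
have -> : br (a - v) (br (a + v) (br (a + v) x)) = u.
  rewrite [br (a + v) x]brDl ax0 add0r [br (a + v) _]brDl brBl !brDr.
  by rewrite a2vx0 v3x0 add0r addr0.
have -> : br (a + v) (br (a - v) (br (a - v) x)) = u.
  rewrite [br (a - v) x]brBl ax0 sub0r brNr [br (a - v) _]brBl opprB.
  by rewrite brDl !brBr a2vx0 v3x0 sub0r subr0.
by rewrite brBl brDl v_u0 subr0 addr0.
Qed.

Lemma adsqN w y : br (- w) (br (- w) y) = br w (br w y).
Proof. by rewrite !brNl brNr opprK. Qed.

End LieAlgebra.

Section HermitianSymmetric.
Variables (R : realType) (V : vectType R[i]) (br : V -> V -> V).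
Variables (theta : 'End(V)) (Ups : V).
Hypotheses (br_lie : lie_bracket br) (theta_inv : lie_involution br theta).
Hypothesis Ups_herm : hermitian_element br theta Ups.

Definition in_m_eigen (s : R[i]) u := in_m theta u /\ br Ups u = s *: u.

Lemma br_m_k u w : in_m theta u -> in_m theta w -> in_k theta (br u w).
Proof.
case: theta_inv => theta_br _ tu tw.
by rewrite /in_k theta_br tu tw (brNl br_lie) (brNr br_lie) opprK.
Qed.

Lemma m_eigen_br_k s u e : in_m_eigen s u -> in_k theta e -> in_m_eigen s (br u e).
Proof.
case: Ups_herm theta_inv => _ Ups_k _ [theta_br _] [tu eu] te; split.
  by rewrite /in_m theta_br tu te (brNl br_lie).
by rewrite (brJ br_lie) eu (Ups_k _ te) (br0r br_lie) addr0 (brZl br_lie).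
Qed.

Lemma br_m_eigen_eq0 s u w :
  s != 0 -> in_m_eigen s u -> in_m_eigen s w -> br u w = 0.
Proof.
case: Ups_herm => _ Ups_k _ s_neq0 [tu eu] [tw ew].
have /eqP := Ups_k _ (br_m_k tu tw).
rewrite (brJ br_lie) eu ew (brZl br_lie) (brZr br_lie) -scalerDl scaler_eq0.
case/orP=> [|/eqP //].
by rewrite -mulr2n -mulr_natr mulf_eq0 (negPf s_neq0) pnatr_eq0.
Qed.

Lemma adsq_m_eigen_k s u e :
  s != 0 -> in_m_eigen s u -> in_k theta e -> br u (br u e) = 0.
Proof. by move=> s_neq0 mu ke; apply: br_m_eigen_eq0 s_neq0 mu (m_eigen_br_k mu ke). Qed.

Lemma adsq_comm_m_eigen s a v x : s != 0 ->
  in_m_eigen s a -> in_m_eigen (- s) v -> in_m_eigen s x ->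
  br (a - v) (br (a - v) (br (a + v) (br (a + v) x))) =
  br (a + v) (br (a + v) (br (a - v) (br (a - v) x))).
Proof.
move=> s_neq0 ma mv mx; have Ns_neq0 : - s != 0 by rewrite oppr_eq0.
apply: adsq_sum_diff_comm => //; first by rewrite pnatr_eq0.
- exact: br_m_eigen_eq0 s_neq0 ma mx.
- exact: adsq_m_eigen_k s_neq0 ma (br_m_k mv.1 mx.1).
- exact: adsq_m_eigen_k Ns_neq0 mv (br_m_k mv.1 mx.1).
- exact: adsq_m_eigen_k Ns_neq0 mv (br_m_k mv.1 ma.1).
Qed.

End HermitianSymmetric.

Theorem proposition4p2 (R : realType) (V : vectType R[i])
  (br : V -> V -> V) (theta : 'End(V)) (Ups : V) :
  simple_lie br ->
  lie_involution br theta ->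
  hermitian_element br theta Ups ->
  forall Z : V, in_m theta Z ->
  forall X : V, in_m theta X ->
    ad br (Jop br Ups Z) (ad br (Jop br Ups Z) (ad br Z (ad br Z X))) =
    ad br Z (ad br Z (ad br (Jop br Ups Z) (ad br (Jop br Ups Z) X))).
Proof.
move=> [br_lie _] theta_inv Ups_herm Z mZ X mX.
have [_ _ split_m] := Ups_herm.
have comm := adsq_comm_m_eigen br_lie theta_inv Ups_herm.
have [Zp [Zm [-> mZp mZm eZp eZm]]] := split_m Z mZ.
have [Xp [Xm [-> mXp mXm eXp eXm]]] := split_m X mX.
have i_neq0 : 'i != 0 :> R[i] by exact: neq0Ci.
have Ni_neq0 : - 'i != 0 :> R[i] by rewrite oppr_eq0.
have Zp_eig : in_m_eigen br theta Ups 'i Zp by [].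
have Zm_eig : in_m_eigen br theta Ups (- 'i) Zm by split; rewrite // scaleNr.
have Xp_eig : in_m_eigen br theta Ups 'i Xp by [].
have Xm_eig : in_m_eigen br theta Ups (- 'i) Xm by split; rewrite // scaleNr.
have -> : Jop br Ups (Zp + Zm) = 'i *: (Zp - Zm).
  by rewrite /Jop /ad (brDr br_lie) eZp eZm scalerBr.
rewrite /ad !(brZl br_lie) !(brZr br_lie) !(brDr br_lie).
congr (_ *: (_ *: (_ + _))); first exact: comm i_neq0 Zp_eig Zm_eig Xp_eig.
rewrite -[Zp - Zm]opprB !(adsqN br_lie) [Zp + Zm]addrC.
by apply: comm Ni_neq0 Zm_eig _ Xm_eig; rewrite opprK.
Qed.
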